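(* Let $q>0$. For every integer $j\ge1$, $$\frac{(-1)^j}{j!}\frac{d}{dq}\tilde\gamma_j(q)=-\sum_{k=j-1}^\infty\frac{(-1)^k}{k!}\binom{k+1}{j}\tilde\gamma_k(q),$$ and $$-\tilde\psi'(q)=-\sum_{k=0}^\infty\frac{(-1)^k}{k!}\tilde\gamma_k(q).$$
   Context: For $q>0$, $\zeta_E(z,q)=\sum_{n=0}^\infty (-1)^n (n+q)^{-z}$ for $\mathrm{Re}(z)>0$, extended by analytic continuation to an entire function of $z$. The modified Stieltjes constants $\tilde\gamma_k(q)$ are defined by the Taylor expansion $\zeta_E(z,q)=\sum_{k=0}^\infty\frac{(-1)^k\tilde\gamma_k(q)}{k!}(z-1)^k$. The modified digamma function is $\tilde\psi(q):=-\tilde\gamma_0(q)=-\zeta_E(1,q)$. *)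

From Stdlib Require Import Reals Factorial.
From Coquelicot Require Import Coquelicot.
Open Scope R_scope.

(* The series converges (conditionally) for z > 0
   and q > 0; Coquelicot's [Series] is the limit of the partial sums. *)
Definition zetaE (z q : R) : R :=
  Series (fun n : nat => (-1) ^ n * Rpower (INR n + q) (- z)).

(* Modified Stieltjes constants: zeta_E(z,q) = sum_k (-1)^k g_k(q)/k! (z-1)^k,
   i.e. g_k(q) = (-1)^k * (d/dz)^k zeta_E(z,q) at z = 1. *)
Definition stieltjesE (k : nat) (q : R) : R :=
  (-1) ^ k * Derive_n (fun z => zetaE z q) k 1.

Definition psiE (q : R) : R := - zetaE 1 q.

(* Three steps of Euler's transformation, with [Δh(y) = h(y) - h(y+1)], rewrite
     zeta_E(z,x) = x^-z/2 + Δ[y^-z](x)/4 + Δ²[y^-z](x)/8 + (1/8) Σ_n (-1)^n Δ³[y^-z](n+x).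
   Expanding [y^(-1-w) = Σ_k w^k φ_k(y)] with [φ_k(y) = (-ln y)^k/(k! y)] inside this form
   gives an absolutely convergent double series for [|w| <= 2], so zeta_E(1+w,x) is a power
   series in [w] whose coefficients [a_k(x) = (-1)^k γ̃_k(x)/k!] are the same Euler sums of
   the [φ_k].  Both identities then hold coefficientwise: [a_j'] is the Euler sum of [φ_j']
   by dominated termwise differentiation, and the exponential-series identity
   [Σ_n C(n+j, j) φ_(n+j-1) = -φ_j'] passes through the Euler sums by Fubini. *)

From Stdlib Require Import Reals Factorial Lra Lia.
From Coquelicot Require Import Coquelicot.
Open Scope R_scope.

(** * Series of real numbers *)

Lemma sum_n_le_Series (a : nat -> R) (N : nat) :
  (forall n, 0 <= a n) -> ex_series a -> sum_n a N <= Series a.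
Proof.
  intros Ha [l Hl]. rewrite (is_series_unique _ _ Hl).
  apply (is_lim_seq_incr_compare (sum_n a) l Hl).
  intros n. rewrite sum_Sn. specialize (Ha (S n)). unfold plus; simpl. lra.
Qed.

Lemma term_le_Series (a : nat -> R) (k : nat) :
  (forall n, 0 <= a n) -> ex_series a -> a k <= Series a.
Proof.
  intros Ha Hex. eapply Rle_trans; [| exact (sum_n_le_Series a k Ha Hex)].
  destruct k as [|k]; [rewrite sum_O; lra|].
  rewrite sum_Sn, sum_n_Reals. unfold plus; simpl.
  assert (0 <= sum_f_R0 a k) by (apply cond_pos_sum; exact Ha). lra.
Qed.

Lemma is_series_ext_R (a b : nat -> R) (l : R) :
  (forall n, a n = b n) -> is_series a l -> is_series b l.
Proof. apply is_series_ext. Qed.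

Lemma Rabs_sign_mult (n : nat) (a : R) : Rabs ((-1) ^ n * a) = Rabs a.
Proof. now rewrite Rabs_mult, pow_1_abs, Rmult_1_l. Qed.

Lemma ex_series_Rabs_le (u b : nat -> R) :
  ex_series b -> (forall n, Rabs (u n) <= b n) -> ex_series u.
Proof.
  intros Hb Hu. exact (ex_series_le (V := R_CompleteNormedModule) u b Hu Hb).
Qed.

Lemma Rabs_Series_le (u b : nat -> R) :
  ex_series b -> (forall n, Rabs (u n) <= b n) -> Rabs (Series u) <= Series b.
Proof.
  intros Hb Hu. eapply Rle_trans.
  - apply Series_Rabs. apply (ex_series_Rabs_le _ b Hb).
    intros n. rewrite Rabs_Rabsolu. apply Hu.
  - apply Series_le; [|exact Hb]. intros n. split; [apply Rabs_pos | apply Hu].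
Qed.

Lemma Series_Rabs_le_is_series (u v : nat -> R) (l : R) :
  (forall n, Rabs (u n) <= v n) -> is_series v l ->
  ex_series (fun n => Rabs (u n)) /\ Series (fun n => Rabs (u n)) <= l.
Proof.
  intros Huv Hv.
  assert (Hex : ex_series (fun n => Rabs (u n))).
  { apply (ex_series_Rabs_le _ v); [now exists l|].
    intros n. rewrite Rabs_Rabsolu. apply Huv. }
  split; [exact Hex|]. rewrite <- (is_series_unique _ _ Hv).
  apply Series_le; [|now exists l]. intros n. split; [apply Rabs_pos | apply Huv].
Qed.

Lemma Series_tail_lt (b : nat -> R) (eps : posreal) :
  ex_series b -> exists N, Rabs (Series (fun k => b (S N + k)%nat)) < eps.
Proof.
  intros Hex. destruct Hex as [l Hl].
  destruct (proj2 (is_lim_seq_spec (sum_n b) l) Hl eps) as [N HN]. exists N.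
  specialize (HN N (le_n N)). rewrite sum_n_Reals in HN.
  pose proof (Series_incr_n b (S N) (Nat.lt_0_succ N) (ex_intro _ l Hl)) as Hsplit.
  rewrite (is_series_unique _ _ Hl) in Hsplit. simpl pred in Hsplit.
  replace (Series _) with (l - sum_f_R0 b N) by lra.
  rewrite Rabs_minus_sym. exact HN.
Qed.

Lemma filterlim_sum_n {T} (F : (T -> Prop) -> Prop) {FF : Filter F}
  (f : T -> nat -> R) (g : nat -> R) (N : nat) :
  (forall m, filterlim (fun t => f t m) F (locally (g m))) ->
  filterlim (fun t => sum_n (f t) N) F (locally (sum_n g N)).
Proof.
  intros Hf. induction N as [|N IH].
  - rewrite sum_O. apply (filterlim_ext (fun t => f t O)); [|apply Hf].
    intros t. now rewrite sum_O.
  - rewrite sum_Sn. apply (filterlim_ext (fun t => plus (sum_n (f t) N) (f t (S N)))).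
    { intros t. now rewrite sum_Sn. }
    apply (filterlim_comp_2 _ _ plus IH (Hf (S N))).
    apply (filterlim_plus (V := R_NormedModule)).
Qed.

Lemma filterlim_Series_dominated {T} (F : (T -> Prop) -> Prop) {FF : Filter F}
  (f : T -> nat -> R) (g b : nat -> R) :
  ex_series b -> F (fun t => forall m, Rabs (f t m) <= b m) ->
  (forall m, filterlim (fun t => f t m) F (locally (g m))) ->
  (forall m, Rabs (g m) <= b m) ->
  filterlim (fun t => Series (f t)) F (locally (Series g)).
Proof.
  intros Hb Hfb Hlim Hgb. apply filterlim_locally. intros eps.
  assert (He3 : 0 < eps / 3) by (pose proof (cond_pos eps); lra).
  destruct (Series_tail_lt b (mkposreal _ He3) Hb) as [N HN]; cbn [pos] in HN.
  pose proof (proj1 (filterlim_locally _ _) (filterlim_sum_n F f g N Hlim)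
                (mkposreal _ He3)) as Hsum.
  generalize (filter_and _ _ Hsum Hfb). apply filter_imp. intros t [Hs Hft].
  change (Rabs (Series (f t) - Series g) < eps).
  change (Rabs (sum_n (f t) N - sum_n g N) < eps / 3) in Hs.
  assert (Hbt : forall u : nat -> R, (forall m, Rabs (u m) <= b m) ->
            Rabs (Series (fun k => u (S N + k)%nat)) <= eps / 3).
  { intros u Hu. eapply Rle_trans.
    - apply (Rabs_Series_le _ (fun k => b (S N + k)%nat)); [now apply ex_series_incr_n|].
      intros k. apply Hu.
    - eapply Rle_trans; [apply Rle_abs | lra]. }
  rewrite (Series_incr_n (f t) (S N) (Nat.lt_0_succ N) (ex_series_Rabs_le _ _ Hb Hft)).
  rewrite (Series_incr_n g (S N) (Nat.lt_0_succ N) (ex_series_Rabs_le _ _ Hb Hgb)).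
  simpl pred. rewrite <- !sum_n_Reals.
  pose proof (Hbt _ Hft). pose proof (Hbt _ Hgb).
  set (tf := Series (fun k => f t (S N + k)%nat)) in *.
  set (tg := Series (fun k => g (S N + k)%nat)) in *.
  replace (sum_n (f t) N + tf - (sum_n g N + tg))
    with ((sum_n (f t) N - sum_n g N) + (tf - tg)) by ring.
  pose proof (Rabs_triang (sum_n (f t) N - sum_n g N) (tf - tg)).
  pose proof (Rabs_triang tf (- tg)). rewrite Rabs_Ropp in *. unfold Rminus in *. lra.
Qed.

Lemma is_series_swap (a : nat -> nat -> R) (b : nat -> R) :
  ex_series b ->
  (forall m, ex_series (fun k => Rabs (a m k)) /\ Series (fun k => Rabs (a m k)) <= b m) ->
  is_series (fun k => Series (fun m => a m k)) (Series (fun m => Series (a m))).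
Proof.
  intros Hb Ha.
  assert (Hpart : forall m K, Rabs (sum_n (a m) K) <= b m).
  { intros m K. destruct (Ha m) as [Hex Hle]. rewrite sum_n_Reals.
    eapply Rle_trans; [apply sum_f_R0_triangle|]. rewrite <- sum_n_Reals.
    eapply Rle_trans; [|exact Hle]. apply sum_n_le_Series; [intros; apply Rabs_pos | exact Hex]. }
  assert (Hterm : forall m k, Rabs (a m k) <= b m).
  { intros m k. destruct (Ha m) as [Hex Hle]. eapply Rle_trans; [|exact Hle].
    apply (term_le_Series (fun k => Rabs (a m k))); [intros; apply Rabs_pos | exact Hex]. }
  assert (Hrows : forall K,
    sum_n (fun k => Series (fun m => a m k)) K = Series (fun m => sum_n (a m) K)).
  { induction K as [|K IH].
    - rewrite sum_O. apply Series_ext. intros m. now rewrite sum_O.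
    - rewrite sum_Sn, IH. unfold plus; simpl. rewrite <- Series_plus.
      + apply Series_ext. intros m. now rewrite sum_Sn.
      + apply (ex_series_Rabs_le _ b Hb). intros m. apply Hpart.
      + apply (ex_series_Rabs_le _ b Hb). intros m. apply Hterm. }
  apply (filterlim_ext (fun K => Series (fun m => sum_n (a m) K))).
  { intros K. now rewrite Hrows. }
  apply (filterlim_Series_dominated eventually _ _ b Hb).
  - exists O. intros K _ m. apply Hpart.
  - intros m. apply Series_correct. apply ex_series_Rabs. apply Ha.
  - intros m. eapply Rle_trans; [apply Series_Rabs; apply Ha | apply Ha].
Qed.

Lemma is_derive_Series (f f' : nat -> R -> R) (B : nat -> R) (x d : R) :
  0 < d -> ex_series B ->
  (forall m t, Rabs (t - x) < d -> is_derive (f m) t (f' m t)) ->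
  (forall m t, Rabs (t - x) < d -> Rabs (f' m t) <= B m) ->
  (forall t, Rabs (t - x) < d -> ex_series (fun m => f m t)) ->
  is_derive (fun t => Series (fun m => f m t)) x (Series (fun m => f' m x)).
Proof.
  intros Hd HB Hder Hbd Hex.
  assert (Hx : Rabs (x - x) < d) by (rewrite Rminus_diag, Rabs_R0; exact Hd).
  assert (Hquot : filterlim (fun h => Series (fun m => (f m (x + h) - f m x) / h))
                    (locally' 0) (locally (Series (fun m => f' m x)))).
  { apply (filterlim_Series_dominated _ _ _ B HB).
    - exists (mkposreal d Hd). intros h Hh Hh0 m. change R in h.
      change (Rabs (h - 0) < d) in Hh. rewrite Rminus_0_r in Hh.
      unfold Rdiv. rewrite Rabs_mult, Rabs_inv.
      apply Rmult_le_reg_r with (Rabs h); [now apply Rabs_pos_lt|].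
      rewrite Rmult_assoc, Rinv_l, Rmult_1_r by now apply Rabs_no_R0.
      rewrite <- (Rplus_minus_l x h) at 2.
      apply (bounded_variation (f m) (f' m)). intros t Ht.
      rewrite Rplus_minus_l in Ht.
      split; [apply Hder | apply Hbd]; lra.
    - intros m. apply filterlim_locally. intros eps.
      destruct (proj1 (is_derive_Reals _ _ _) (Hder m x Hx) eps (cond_pos eps)) as [e He].
      exists e. intros h Hh Hh0. change (Rabs (h - 0) < e) in Hh. rewrite Rminus_0_r in Hh.
      now apply He.
    - intros m. now apply Hbd. }
  apply is_derive_Reals. intros eps Heps.
  destruct (proj1 (filterlim_locally _ _) Hquot (mkposreal eps Heps)) as [e He].
  exists (mkposreal (Rmin e d) (Rmin_pos _ _ (cond_pos e) Hd)). intros h Hh0 Hh. simpl in Hh.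
  assert (Hhe : ball 0 e h).
  { change (Rabs (h - 0) < e). rewrite Rminus_0_r. pose proof (Rmin_l e d). lra. }
  specialize (He h Hhe Hh0).
  replace ((Series (fun m => f m (x + h)) - Series (fun m => f m x)) / h)
    with (Series (fun m => (f m (x + h) - f m x) / h)); [exact He|].
  unfold Rdiv. rewrite Series_scal_r, Series_minus; [reflexivity| |now apply Hex].
  apply Hex. replace (x + h - x) with h by ring. pose proof (Rmin_r e d). lra.
Qed.

Lemma Series_shift_le (v : nat -> R) (s : nat) :
  (forall n, 0 <= v n) -> ex_series v ->
  ex_series (fun n => v (n + s)%nat) /\ Series (fun n => v (n + s)%nat) <= Series v.
Proof.
  intros Hv Hex.
  assert (Hshift : forall n, v (s + n)%nat = v (n + s)%nat) by (intros n; f_equal; lia).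
  assert (Hex' : ex_series (fun n => v (n + s)%nat)).
  { eapply ex_series_ext; [exact Hshift|]. now apply ex_series_incr_n. }
  split; [exact Hex'|].
  destruct s as [|s].
  - right. apply Series_ext. intros n. now rewrite Nat.add_0_r.
  - rewrite (Series_incr_n v (S s)), (Series_ext _ _ Hshift); [|lia|exact Hex].
    simpl pred. assert (0 <= sum_f_R0 v s) by now apply cond_pos_sum. lra.
Qed.

Lemma is_series_telescope (g : nat -> R) :
  is_lim_seq g 0 -> is_series (fun n => g n - g (S n)) (g O).
Proof.
  intros Hg. change (is_lim_seq (sum_n (fun n => g n - g (S n))) (g O)).
  apply (is_lim_seq_ext (fun N => g O - g (S N))).
  - intros N. induction N as [|N IH].
    + now rewrite sum_O.
    + rewrite sum_Sn, <- IH. unfold plus; simpl. ring.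
  - replace (Finite (g O)) with (Rbar_minus (g O) 0) by (simpl; f_equal; ring).
    apply is_lim_seq_minus'; [apply is_lim_seq_const | now apply -> is_lim_seq_incr_1].
Qed.

Lemma is_lim_seq_inv_INR_plus (a : R) : is_lim_seq (fun n => / (INR n + a)) 0.
Proof.
  replace (Finite 0) with (Rbar_inv p_infty) by reflexivity.
  apply is_lim_seq_inv; [|discriminate].
  eapply is_lim_seq_plus; [apply is_lim_seq_INR | apply is_lim_seq_const | reflexivity].
Qed.

Lemma ex_series_inv_pow (a : R) (p : nat) :
  0 < a -> (2 <= p)%nat -> ex_series (fun n => (/ (INR n + a)) ^ p).
Proof.
  intros Ha Hp.
  pose proof (is_series_telescope _ (is_lim_seq_inv_INR_plus a)) as Htel.
  apply (ex_series_Rabs_le _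
           (fun n => (/ a) ^ (p - 2) * (1 + / a) * (/ (INR n + a) - / (INR (S n) + a)))).
  { eexists. apply (is_series_scal_l (V := R_NormedModule)). exact Htel. }
  intros n.
  pose proof (pos_INR n) as Hn. rewrite S_INR.
  set (v := / (INR n + a)).
  assert (Hv : 0 < v) by (apply Rinv_0_lt_compat; lra).
  assert (Hva : v <= / a) by (apply Rinv_le_contravar; lra).
  assert (Hsq : v ^ 2 = (1 + v) * (v - / (INR n + 1 + a))).
  { unfold v. field. lra. }
  rewrite Rabs_pos_eq by (apply pow_le; lra).
  replace p with ((p - 2) + 2)%nat at 1 by lia. rewrite pow_add, Hsq, <- Rmult_assoc.
  assert (0 <= v - / (INR n + 1 + a)).
  { assert (/ (INR n + 1 + a) <= v) by (apply Rinv_le_contravar; lra). lra. }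
  apply Rmult_le_compat_r; [assumption|].
  apply Rmult_le_compat; [apply pow_le; lra | lra | apply pow_incr; lra | lra].
Qed.

Lemma CV_radius_ge_of_ex_series (a : nat -> R) (r : R) :
  ex_series (fun n => a n * r ^ n) -> Rbar_le (Rabs r) (CV_radius a).
Proof.
  intros Hex. apply Rbar_not_lt_le. intros Hlt.
  exact (CV_disk_outside a r Hlt (ex_series_lim_0 _ Hex)).
Qed.

Lemma is_series_alt_euler_step (g : nat -> R) (l : R) :
  is_lim_seq g 0 -> is_series (fun n => (-1) ^ n * (g n - g (S n))) l ->
  is_series (fun n => (-1) ^ n * g n) (g O / 2 + l / 2).
Proof.
  intros Hg Hl.
  assert (Hpart : forall N, sum_n (fun n => (-1) ^ n * g n) (S N) =
    g O / 2 + sum_n (fun n => (-1) ^ n * (g n - g (S n))) N / 2 + (-1) ^ S N * g (S N) / 2).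
  { induction N as [|N IH].
    - rewrite sum_Sn, !sum_O. unfold plus; simpl. field.
    - rewrite sum_Sn, IH, sum_Sn. unfold plus; simpl. field. }
  change (is_lim_seq (sum_n (fun n => (-1) ^ n * g n)) (g O / 2 + l / 2)).
  apply is_lim_seq_incr_1.
  apply (is_lim_seq_ext _ _ _ (fun N => eq_sym (Hpart N))).
  replace (g O / 2 + l / 2) with (g O / 2 + l / 2 + 0) by ring.
  apply is_lim_seq_plus'; [apply is_lim_seq_plus'; [apply is_lim_seq_const|]|].
  - apply (is_lim_seq_scal_r _ (/ 2) l). exact Hl.
  - apply is_lim_seq_abs_0.
    apply (is_lim_seq_ext (fun N => Rabs (g (S N)) * / 2)).
    { intros N. unfold Rdiv. rewrite !Rabs_mult, pow_1_abs, Rmult_1_l.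
      now rewrite (Rabs_pos_eq (/ 2)) by lra. }
    replace 0 with (0 * / 2) by ring. apply (is_lim_seq_scal_r _ (/ 2) 0).
    apply -> is_lim_seq_abs_0. now apply -> is_lim_seq_incr_1.
Qed.

Lemma C_nonneg (n k : nat) : 0 <= Binomial.C n k.
Proof.
  unfold Binomial.C. apply Rmult_le_pos; [apply pos_INR|].
  apply Rlt_le, Rinv_0_lt_compat, Rmult_lt_0_compat; apply INR_fact_lt_0.
Qed.

Lemma C_le_pow2 (n k : nat) : (k <= n)%nat -> Binomial.C n k <= 2 ^ n.
Proof.
  revert k. induction n as [|n IH]; intros k Hk.
  - replace k with O by lia. rewrite C_n_0. simpl; lra.
  - destruct k as [|i]; [rewrite C_n_0; apply pow_R1_Rle; lra|].
    destruct (Nat.eq_dec i n) as [->|Hi]; [rewrite C_n_n; apply pow_R1_Rle; lra|].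
    rewrite <- pascal by lia. simpl.
    pose proof (IH i ltac:(lia)). pose proof (IH (S i) ltac:(lia)). lra.
Qed.

(** * Forward differences and Euler's transformation *)

Lemma is_derive_shift (g : R -> R) (c y l : R) :
  is_derive g (y + c) l -> is_derive (fun t => g (t + c)) y l.
Proof.
  intros Hg.
  assert (Hc : is_derive (fun t => t + c) y 1) by (auto_derive; [exact I | ring]).
  pose proof (is_derive_comp g (fun t => t + c) y l 1 Hg Hc) as H.
  now rewrite (scal_one (V := R_NormedModule)) in H.
Qed.

Definition fdiff (h : R -> R) (y : R) : R := h y - h (y + 1).

Fixpoint fdiff_n (N : nat) (h : R -> R) : R -> R :=
  match N with
  | O => h
  | S N => fdiff_n N (fdiff h)
  end.

Lemma fdiff_n_ext (N : nat) (f g : R -> R) (y : R) :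
  (forall t, f t = g t) -> fdiff_n N f y = fdiff_n N g y.
Proof.
  revert f g y. induction N as [|N IH]; intros f g y Hfg; [apply Hfg|].
  apply IH. intros t. unfold fdiff. now rewrite !Hfg.
Qed.

Lemma fdiff_n_scal (N : nat) (c : R) (h : R -> R) (y : R) :
  fdiff_n N (fun t => c * h t) y = c * fdiff_n N h y.
Proof.
  revert h y. induction N as [|N IH]; intros h y; [reflexivity|]. simpl.
  rewrite <- IH. apply fdiff_n_ext. intros t. unfold fdiff. ring.
Qed.

Lemma is_derive_fdiff (h h' : R -> R) :
  (forall t, 0 < t -> is_derive h t (h' t)) ->
  forall y, 0 < y -> is_derive (fdiff h) y (fdiff h' y).
Proof.
  intros Hh y Hy. apply (is_derive_minus (V := R_NormedModule)); [now apply Hh|].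
  apply is_derive_shift, Hh. lra.
Qed.

Lemma is_series_fdiff (u : nat -> R -> R) (v : R -> R) (y : R) :
  (forall t, y <= t -> is_series (fun k => u k t) (v t)) ->
  forall t, y <= t -> is_series (fun k => fdiff (u k) t) (fdiff v t).
Proof.
  intros Huv t Ht. apply (is_series_minus (V := R_NormedModule)); apply Huv; lra.
Qed.

Lemma is_series_fdiff_n (N : nat) (u : nat -> R -> R) (v : R -> R) (y : R) :
  (forall t, y <= t -> is_series (fun k => u k t) (v t)) ->
  is_series (fun k => fdiff_n N (u k) y) (fdiff_n N v y).
Proof.
  revert u v. induction N as [|N IH]; intros u v Huv; [apply Huv; lra|].
  apply (IH (fun k => fdiff (u k))), is_series_fdiff, Huv.
Qed.

Lemma Rabs_fdiff_le (g g' : R -> R) (y M : R) :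
  (forall t, y <= t <= y + 1 -> is_derive g t (g' t) /\ Rabs (g' t) <= M) ->
  Rabs (fdiff g y) <= M.
Proof.
  intros Hg.
  assert (Hin : forall t, Rmin y (y + 1) <= t <= Rmax y (y + 1) -> y <= t <= y + 1).
  { intros t. rewrite Rmin_left, Rmax_right by lra. auto. }
  destruct (MVT_gen g y (y + 1) g') as [c [Hc Hmvt]].
  - intros t Ht. apply Hg, Hin. lra.
  - intros t Ht. apply continuity_pt_filterlim.
    apply (ex_derive_continuous (V := R_NormedModule)). eexists. apply Hg, Hin, Ht.
  - unfold fdiff. rewrite Rabs_minus_sym, Hmvt. replace (y + 1 - y) with 1 by ring.
    rewrite Rmult_1_r. apply Hg, Hin, Hc.
Qed.

Lemma Rabs_fdiff_n_le (hs : nat -> R -> R) (N : nat) (y M : R) :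
  0 < y ->
  (forall i t, (i < N)%nat -> 0 < t -> is_derive (hs i) t (hs (S i) t)) ->
  (forall t, y <= t <= y + INR N -> Rabs (hs N t) <= M) ->
  Rabs (fdiff_n N (hs O) y) <= M.
Proof.
  revert hs. induction N as [|N IH]; intros hs Hy Hder Hbound.
  - apply Hbound. simpl. lra.
  - apply (IH (fun i => fdiff (hs i))); [exact Hy| |].
    + intros i t Hi Ht. apply is_derive_fdiff; [|exact Ht].
      intros s Hs. apply Hder; [lia | exact Hs].
    + intros t Ht. rewrite S_INR in Hbound. apply (Rabs_fdiff_le _ (hs (S N))).
      intros s Hs. split; [apply Hder; lia || lra | apply Hbound; lra].
Qed.

(* [euler_sum N h x] is what [N] steps of Euler's transformation make of
   [Σ_n (-1)^n h (n + x)]: the same value whenever [h (n + x) --> 0]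
   (is_series_alt_euler_sum), but with a tail series in the faster decaying [fdiff_n N h]. *)
Fixpoint euler_sum (N : nat) (h : R -> R) (x : R) : R :=
  match N with
  | O => Series (fun n => (-1) ^ n * h (INR n + x))
  | S N => h x / 2 + euler_sum N (fdiff h) x / 2
  end.

Lemma euler_sum_ext (N : nat) (f g : R -> R) (x : R) :
  (forall t, f t = g t) -> euler_sum N f x = euler_sum N g x.
Proof.
  revert f g. induction N as [|N IH]; intros f g Hfg; simpl.
  - apply Series_ext. intros n. now rewrite Hfg.
  - rewrite Hfg, (IH _ (fdiff g)); [reflexivity|]. intros t. unfold fdiff. now rewrite !Hfg.
Qed.

Lemma euler_sum_scal (N : nat) (c : R) (h : R -> R) (x : R) :
  euler_sum N (fun t => c * h t) x = c * euler_sum N h x.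
Proof.
  revert h. induction N as [|N IH]; intros h; simpl.
  - rewrite <- Series_scal_l. apply Series_ext. intros n. ring.
  - rewrite (euler_sum_ext N _ (fun t => c * fdiff h t)), IH; [field|].
    intros t. unfold fdiff. ring.
Qed.

Lemma is_series_alt_euler_sum (N : nat) (h : R -> R) (x : R) :
  is_lim_seq (fun n => h (INR n + x)) 0 ->
  ex_series (fun n => (-1) ^ n * fdiff_n N h (INR n + x)) ->
  is_series (fun n => (-1) ^ n * h (INR n + x)) (euler_sum N h x).
Proof.
  revert h. induction N as [|N IH]; intros h Hlim Hex; [now apply Series_correct|].
  assert (Hstep : forall n, fdiff h (INR n + x) = h (INR n + x) - h (INR (S n) + x)).
  { intros n. unfold fdiff. rewrite S_INR. f_equal. f_equal. ring. }
  simpl euler_sum. replace (h x) with (h (INR 0 + x)) by (f_equal; simpl; ring).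
  apply (is_series_alt_euler_step (fun n => h (INR n + x))); [exact Hlim|].
  apply (is_series_ext (fun n => (-1) ^ n * fdiff h (INR n + x))).
  { intros n. now rewrite Hstep. }
  apply IH; [|exact Hex].
  apply (is_lim_seq_ext _ _ _ (fun n => eq_sym (Hstep n))).
  replace (Finite 0) with (Rbar_minus 0 0) by (simpl; f_equal; ring).
  apply is_lim_seq_minus'; [exact Hlim|].
  now apply -> (is_lim_seq_incr_1 (fun n => h (INR n + x))).
Qed.

Lemma is_series_euler_sum (N : nat) (u : nat -> R -> R) (v : R -> R) (B : nat -> R) (x : R) :
  (forall t, x <= t -> is_series (fun k => u k t) (v t)) -> ex_series B ->
  (forall n, ex_series (fun k => Rabs (fdiff_n N (u k) (INR n + x))) /\
             Series (fun k => Rabs (fdiff_n N (u k) (INR n + x))) <= B n) ->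
  is_series (fun k => euler_sum N (u k) x) (euler_sum N v x).
Proof.
  revert u v. induction N as [|N IH]; intros u v Huv HB Hdom; simpl.
  - assert (Hrow : forall n, Series (fun k => (-1) ^ n * u k (INR n + x))
                             = (-1) ^ n * v (INR n + x)).
    { intros n. rewrite Series_scal_l. f_equal. apply is_series_unique, Huv.
      pose proof (pos_INR n). lra. }
    rewrite <- (Series_ext _ _ Hrow).
    apply (is_series_swap (fun n k => (-1) ^ n * u k (INR n + x)) B HB).
    intros n. destruct (Hdom n) as [Hex Hle].
    assert (Hsign : forall k, Rabs (u k (INR n + x)) = Rabs ((-1) ^ n * u k (INR n + x)))
      by (intros k; now rewrite Rabs_sign_mult).
    split; [exact (ex_series_ext _ _ Hsign Hex) | now rewrite <- (Series_ext _ _ Hsign)].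
  - apply (is_series_plus (V := R_NormedModule));
      apply (is_series_scal_r (/ 2)); [now apply Huv|].
    apply IH; [now apply is_series_fdiff | exact HB | exact Hdom].
Qed.

Lemma is_derive_euler_sum (N : nat) (h h' : R -> R) (B : nat -> R) (x d : R) :
  0 < d <= x -> ex_series B ->
  (forall t, 0 < t -> is_derive h t (h' t)) ->
  (forall n t, Rabs (t - x) < d -> Rabs (fdiff_n N h' (INR n + t)) <= B n) ->
  (forall t, Rabs (t - x) < d -> ex_series (fun n => (-1) ^ n * fdiff_n N h (INR n + t))) ->
  is_derive (euler_sum N h) x (euler_sum N h' x).
Proof.
  revert h h'. induction N as [|N IH]; intros h h' Hd HB Hh Hbound Hex.
  - assert (Hpos : forall n t, Rabs (t - x) < d -> 0 < INR n + t).
    { intros n t Ht. pose proof (pos_INR n). apply Rabs_def2 in Ht. lra. }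
    apply (is_derive_Series (fun n t => (-1) ^ n * h (INR n + t))
             (fun n t => (-1) ^ n * h' (INR n + t)) B x d); try easy.
    + intros n t Ht. apply is_derive_scal.
      apply (is_derive_ext (fun s => h (s + INR n))); [intros s; now rewrite Rplus_comm|].
      apply is_derive_shift. rewrite Rplus_comm. now apply Hh, Hpos.
    + intros n t Ht. rewrite Rabs_sign_mult. now apply Hbound.
  - apply (is_derive_ext (fun t => / 2 * h t + / 2 * euler_sum N (fdiff h) t)).
    { intros t. simpl. field. }
    replace (euler_sum (S N) h' x) with (/ 2 * h' x + / 2 * euler_sum N (fdiff h') x)
      by (simpl; field).
    apply (is_derive_plus (V := R_NormedModule)); apply is_derive_scal; [apply Hh; lra|].
    apply IH; try easy. now apply is_derive_fdiff.
Qed.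

(** * Coefficients of [y^(-1-w)] *)

Lemma is_series_exp (u : R) : is_series (fun n => u ^ n / INR (fact n)) (exp u).
Proof.
  eapply is_series_ext; [|exact (is_exp_Reals u)]. intros n. simpl.
  rewrite pow_n_pow. unfold scal; simpl; unfold mult; simpl. unfold Rdiv. ring.
Qed.

Definition exp_coef (u : R) (k i : nat) : R :=
  if Nat.leb i k then u ^ (k - i) / INR (fact (k - i)) else 0.

Lemma exp_coef_nonneg (u : R) (k i : nat) : 0 <= u -> 0 <= exp_coef u k i.
Proof.
  intros Hu. unfold exp_coef. destruct (Nat.leb i k); [|lra].
  apply Rmult_le_pos; [now apply pow_le | apply Rlt_le, Rinv_0_lt_compat, INR_fact_lt_0].
Qed.

Lemma exp_coef_le (u v : R) (k i : nat) : 0 <= u <= v -> exp_coef u k i <= exp_coef v k i.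
Proof.
  intros Huv. unfold exp_coef. destruct (Nat.leb i k); [|lra].
  apply Rmult_le_compat_r; [apply Rlt_le, Rinv_0_lt_compat, INR_fact_lt_0|].
  now apply pow_incr.
Qed.

Lemma Rabs_exp_coef (u : R) (k i : nat) : Rabs (exp_coef u k i) = exp_coef (Rabs u) k i.
Proof.
  unfold exp_coef. destruct (Nat.leb i k); [|apply Rabs_R0].
  unfold Rdiv. rewrite Rabs_mult, <- RPow_abs, (Rabs_pos_eq (/ _)); [reflexivity|].
  apply Rlt_le, Rinv_0_lt_compat, INR_fact_lt_0.
Qed.

Lemma exp_coef_le_exp (u : R) (k i : nat) : 0 <= u -> exp_coef u k i <= exp u.
Proof.
  intros Hu. unfold exp_coef. destruct (Nat.leb i k); [|apply Rlt_le, exp_pos].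
  rewrite <- (is_series_unique _ _ (is_series_exp u)).
  apply (term_le_Series (fun n => u ^ n / INR (fact n))); [|eexists; apply is_series_exp].
  intros n. apply Rmult_le_pos; [now apply pow_le | apply Rlt_le, Rinv_0_lt_compat, INR_fact_lt_0].
Qed.

Lemma is_series_exp_coef (r L : R) (i : nat) :
  is_series (fun k => r ^ k * exp_coef L k i) (r ^ i * exp (r * L)).
Proof.
  induction i as [|i IH].
  - eapply is_series_ext_R; [|replace (r ^ 0 * exp (r * L)) with (exp (r * L)) by ring;
                             apply is_series_exp].
    intros n. unfold exp_coef. simpl Nat.leb. cbv iota.
    rewrite Nat.sub_0_r, Rpow_mult_distr. unfold Rdiv. ring.
  - apply is_series_decr_1.
    replace (plus _ _) with (scal r (r ^ i * exp (r * L)))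
      by (unfold exp_coef, scal, plus, opp; simpl; unfold mult; simpl; ring).
    eapply is_series_ext; [|apply (is_series_scal_l (V := R_NormedModule) r), IH].
    intros n. unfold exp_coef. simpl. unfold scal; simpl; unfold mult; simpl. ring.
Qed.

Definition psi (k i p : nat) (y : R) : R := exp_coef (- ln y) k i * (/ y) ^ p.

Lemma is_derive_exp_coef_ln (k i : nat) (y : R) : 0 < y ->
  is_derive (fun t => exp_coef (- ln t) k i) y (- exp_coef (- ln y) k (S i) / y).
Proof.
  intros Hy. unfold exp_coef.
  destruct (Nat.leb i k) eqn:Hik; [apply Nat.leb_le in Hik | apply Nat.leb_gt in Hik].
  - destruct (k - i)%nat as [|m] eqn:Hm.
    + replace (Nat.leb (S i) k) with false by (symmetry; apply Nat.leb_gt; lia).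
      replace (- 0 / y) with 0 by (field; lra).
      apply (is_derive_ext (fun _ => 1)); [intros t; simpl; field|].
      apply (is_derive_const (K := R_AbsRing) 1).
    + replace (Nat.leb (S i) k) with true by (symmetry; apply Nat.leb_le; lia).
      replace (k - S i)%nat with m by lia.
      auto_derive; [exact Hy|].
      replace (match m with O => 1 | S _ => INR m + 1 end) with (INR m + 1)
        by (destruct m; simpl; ring).
      replace (INR (fact m + m * fact m)) with ((INR m + 1) * INR (fact m))
        by (rewrite plus_INR, mult_INR; ring).
      pose proof (pos_INR m). pose proof (INR_fact_neq_0 m).
      field. repeat split; lra.
  - replace (Nat.leb (S i) k) with false by (symmetry; apply Nat.leb_gt; lia).
    replace (- 0 / y) with 0 by (field; lra). apply (is_derive_const (K := R_AbsRing) 0).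
Qed.

Lemma is_derive_inv_pow (p : nat) (y : R) : 0 < y ->
  is_derive (fun t => (/ t) ^ p) y (- INR p * (/ y) ^ S p).
Proof.
  intros Hy. auto_derive; [lra|].
  destruct p; [simpl; ring|]. rewrite S_INR. simpl. field. lra.
Qed.

Lemma is_derive_psi (k i p : nat) (y : R) : 0 < y ->
  is_derive (psi k i p) y (- INR p * psi k i (S p) y - psi k (S i) (S p) y).
Proof.
  intros Hy. unfold psi.
  eapply is_derive_ext; [intros t; reflexivity|].
  replace (- INR p * _ - _) with
    (- exp_coef (- ln y) k (S i) / y * (/ y) ^ p + exp_coef (- ln y) k i * (- INR p * (/ y) ^ S p))
    by (simpl; field; lra).
  apply (is_derive_mult (fun t => exp_coef (- ln t) k i) (fun t => (/ t) ^ p));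
    [now apply is_derive_exp_coef_ln | now apply is_derive_inv_pow | intros; apply Rmult_comm].
Qed.

(* [phi 0 k y = (- ln y)^k / (k! y)] is the coefficient of [w^k] in [y^(-1-w)]
   (is_series_phi0_pow), and [phi m k] is its [m]-th derivative in [y] for [m <= 4]
   (junk beyond); the integer coefficients are those of [(1+w)(2+w)...(m+w)]. *)
Definition phi (m k : nat) (y : R) : R :=
  match m with
  | O => psi k 0 1 y
  | 1 => - psi k 0 2 y - psi k 1 2 y
  | 2 => 2 * psi k 0 3 y + 3 * psi k 1 3 y + psi k 2 3 y
  | 3 => - (6 * psi k 0 4 y + 11 * psi k 1 4 y + 6 * psi k 2 4 y + psi k 3 4 y)
  | _ => 24 * psi k 0 5 y + 50 * psi k 1 5 y + 35 * psi k 2 5 y + 10 * psi k 3 5 y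
         + psi k 4 5 y
  end.

Lemma is_derive_phi (m k : nat) (y : R) : (m < 4)%nat -> 0 < y ->
  is_derive (phi m k) y (phi (S m) k y).
Proof.
  intros Hm Hy.
  assert (Hpsi := fun i p => is_derive_psi k i p y Hy).
  assert (Hval : forall (f : R -> R) (l l' : R), is_derive f y l -> l = l' -> is_derive f y l')
    by (intros f l l' H <-; exact H).
  destruct m as [|[|[|[|m]]]]; [| | | | lia]; simpl INR in Hpsi.
  - eapply Hval; [apply Hpsi | simpl; ring].
  - eapply Hval; [apply (is_derive_minus (V := R_NormedModule));
                  [apply (is_derive_opp (V := R_NormedModule))|]; apply Hpsi |].
    unfold minus, plus, opp; simpl; ring.
  - eapply Hval; [apply (is_derive_plus (V := R_NormedModule));
                  [apply (is_derive_plus (V := R_NormedModule)); apply is_derive_scal|];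
                  apply Hpsi |].
    unfold minus, plus, opp; simpl; ring.
  - eapply Hval; [apply (is_derive_opp (V := R_NormedModule));
                  apply (is_derive_plus (V := R_NormedModule));
                  [apply (is_derive_plus (V := R_NormedModule));
                   [apply (is_derive_plus (V := R_NormedModule))|]; apply is_derive_scal|];
                  apply Hpsi |].
    unfold minus, plus, opp; simpl; ring.
Qed.

Lemma is_series_phi0_pow (w y : R) : 0 < y ->
  is_series (fun k => w ^ k * phi 0 k y) (Rpower y (- (1 + w))).
Proof.
  intros Hy. unfold Rpower.
  replace (- (1 + w) * ln y) with (- ln y + w * - ln y) by ring.
  rewrite exp_plus, exp_Ropp, exp_ln by exact Hy.
  eapply is_series_ext; [|apply (is_series_scal_l (V := R_NormedModule) (/ y)), is_series_exp].
  intros k. unfold phi, psi, exp_coef, scal; simpl; unfold mult; simpl.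
  rewrite Nat.sub_0_r, Rpow_mult_distr. unfold Rdiv. ring.
Qed.

Lemma is_series_index_exp (u : R) :
  is_series (fun n => INR n * (u ^ n / INR (fact n))) (u * exp u).
Proof.
  apply is_series_decr_1.
  replace (plus _ _) with (scal u (exp u))
    by (unfold scal, plus, opp; simpl; unfold mult; simpl; ring).
  eapply is_series_ext; [|apply (is_series_scal_l (V := R_NormedModule) u), is_series_exp].
  intros n.
  change (u * (u ^ n / INR (fact n)) = INR (S n) * (u ^ S n / INR (fact (S n)))).
  rewrite fact_simpl, mult_INR, S_INR. pose proof (pos_INR n). pose proof (INR_fact_neq_0 n).
  simpl. field. lra.
Qed.

(* With [u = - ln y]: [Σ_(k >= j-1) C(k+1, j) u^k / k! = e^u (u^j / j! + u^(j-1) / (j-1)!)];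
   for [j = 0], [0 - 1 = 0] in [nat] and the sum is [Σ_k phi 0 k y = y^(-2)]. *)
Lemma is_series_binom_phi0 (j : nat) (y : R) : 0 < y ->
  is_series (fun n => Binomial.C (n + (j - 1) + 1) j * phi 0 (n + (j - 1)) y) (- phi 1 j y).
Proof.
  intros Hy. destruct j as [|i].
  - replace (- phi 1 0 y) with (Rpower y (- (1 + 1))).
    + eapply is_series_ext; [|apply is_series_phi0_pow, Hy].
      intros n. simpl. rewrite Nat.add_0_r, pow1, C_n_0. ring.
    + unfold Rpower, phi, psi, exp_coef. simpl.
      replace (- (1 + 1) * ln y) with (- ln y + - ln y) by ring.
      rewrite exp_plus, exp_Ropp, exp_ln by exact Hy. field. lra.
  - replace (S i - 1)%nat with i by lia. set (u := - ln y).
    assert (Hu : exp u = / y) by (unfold u; now rewrite exp_Ropp, exp_ln).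
    replace (- phi 1 (S i) y)
      with (u ^ i / (y * INR (fact (S i))) * (u * exp u + INR (S i) * exp u)).
    + eapply is_series_ext.
      2: { apply (is_series_scal_l (V := R_NormedModule)).
           apply (is_series_plus (V := R_NormedModule)); [apply is_series_index_exp|].
           apply (is_series_scal_l (V := R_NormedModule)), is_series_exp. }
      intros n.
      change (u ^ i / (y * INR (fact (S i)))
                * (INR n * (u ^ n / INR (fact n)) + INR (S i) * (u ^ n / INR (fact n)))
              = Binomial.C (n + i + 1) (S i) * phi 0 (n + i) y).
      unfold Binomial.C, phi, psi, exp_coef. fold u. simpl Nat.leb. cbv iota.
      replace (n + i + 1 - S i)%nat with n by lia.
      replace (n + i + 1)%nat with (S (n + i)) by lia.
      rewrite Nat.sub_0_r, !fact_simpl, !mult_INR, !S_INR, plus_INR, pow_add, pow_1.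
      pose proof (INR_fact_neq_0 n). pose proof (INR_fact_neq_0 i).
      pose proof (INR_fact_neq_0 (n + i)). pose proof (pos_INR i).
      field. lra.
    + rewrite Hu. unfold phi, psi, exp_coef. fold u. simpl Nat.leb. cbv iota.
      replace (S i - 1)%nat with i by lia. rewrite Nat.sub_0_r.
      rewrite fact_simpl, mult_INR, S_INR.
      change (u ^ S i) with (u * u ^ i).
      pose proof (INR_fact_neq_0 i). pose proof (pos_INR i). field. lra.
Qed.

Lemma inv_pow_le (p : nat) (y t : R) : 0 < y <= t -> (/ t) ^ p <= (/ y) ^ p.
Proof.
  intros Hyt. apply pow_incr. split; [apply Rlt_le, Rinv_0_lt_compat; lra|].
  apply Rinv_le_contravar; lra.
Qed.

Lemma Rabs_psi_le (k i p : nat) (y t L : R) : 0 < y <= t -> Rabs (ln t) <= L ->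
  Rabs (psi k i p t) <= exp_coef L k i * (/ y) ^ p.
Proof.
  intros Hyt HL. unfold psi. rewrite Rabs_mult, Rabs_exp_coef, Rabs_Ropp.
  rewrite (Rabs_pos_eq ((/ t) ^ p)) by (apply pow_le, Rlt_le, Rinv_0_lt_compat; lra).
  apply Rmult_le_compat; [apply exp_coef_nonneg, Rabs_pos | | | now apply inv_pow_le].
  - apply pow_le, Rlt_le, Rinv_0_lt_compat; lra.
  - apply exp_coef_le. split; [apply Rabs_pos | exact HL].
Qed.

Lemma exp_Rabs_ln_le (t : R) : 0 < t -> exp (Rabs (ln t)) <= t + / t.
Proof.
  intros Ht. pose proof (Rinv_0_lt_compat _ Ht).
  destruct (Rle_lt_dec 0 (ln t)).
  - rewrite Rabs_pos_eq, exp_ln by lra. lra.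
  - rewrite Rabs_left, exp_Ropp, exp_ln by lra. lra.
Qed.

Lemma Rabs_psi_le_inv_pow (k i p : nat) (y t : R) : 0 < y <= t ->
  Rabs (psi k i (S p) t) <= (/ y) ^ p + (/ y) ^ S (S p).
Proof.
  intros Hyt. unfold psi. rewrite Rabs_mult, Rabs_exp_coef, Rabs_Ropp.
  rewrite (Rabs_pos_eq ((/ t) ^ _)) by (apply pow_le, Rlt_le, Rinv_0_lt_compat; lra).
  apply Rle_trans with ((t + / t) * (/ t) ^ S p).
  - apply Rmult_le_compat_r; [apply pow_le, Rlt_le, Rinv_0_lt_compat; lra|].
    eapply Rle_trans; [apply exp_coef_le_exp, Rabs_pos | apply exp_Rabs_ln_le; lra].
  - replace ((t + / t) * (/ t) ^ S p) with ((/ t) ^ p + (/ t) ^ S (S p)) by (simpl; field; lra).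
    apply Rplus_le_compat; now apply inv_pow_le.
Qed.

(* The coefficient of [w^k] in [(1+w)(2+w)(3+w) e^(w L)], so that weighting by [2^k]
   sums it to [3 * 4 * 5 * e^(2 L)]. *)
Definition phi3_majorant (L : R) (k : nat) : R :=
  6 * exp_coef L k 0 + 11 * exp_coef L k 1 + 6 * exp_coef L k 2 + exp_coef L k 3.

Lemma Rabs_phi3_le (k : nat) (y t L : R) : 0 < y <= t -> Rabs (ln t) <= L ->
  Rabs (phi 3 k t) <= phi3_majorant L k * (/ y) ^ 4.
Proof.
  intros Hyt HL. unfold phi3_majorant.
  pose proof (fun i => proj1 (Rabs_le_between _ _) (Rabs_psi_le k i 4 y t L Hyt HL)) as Hb.
  pose proof (Hb 0%nat). pose proof (Hb 1%nat). pose proof (Hb 2%nat). pose proof (Hb 3%nat).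
  apply Rabs_le_between. simpl phi. lra.
Qed.

Lemma is_series_phi3_majorant (L : R) :
  is_series (fun k => 2 ^ k * phi3_majorant L k) (60 * exp (2 * L)).
Proof.
  set (E := exp (2 * L)).
  replace (60 * E) with (6 * (2 ^ 0 * E) + 11 * (2 ^ 1 * E) + 6 * (2 ^ 2 * E) + 2 ^ 3 * E)
    by (simpl; ring).
  apply (is_series_ext_R (fun k => 6 * (2 ^ k * exp_coef L k 0) + 11 * (2 ^ k * exp_coef L k 1)
                                 + 6 * (2 ^ k * exp_coef L k 2) + 2 ^ k * exp_coef L k 3)).
  { intros k. unfold phi3_majorant. ring. }
  repeat apply (is_series_plus (V := R_NormedModule));
    try apply (is_series_scal_l (V := R_NormedModule)); apply is_series_exp_coef.
Qed.

Lemma Rabs_phi4_le (k : nat) (y t : R) : 0 < y <= t ->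
  Rabs (phi 4 k t) <= 120 * ((/ y) ^ 4 + (/ y) ^ 6).
Proof.
  intros Hyt.
  pose proof (fun i => proj1 (Rabs_le_between _ _) (Rabs_psi_le_inv_pow k i 4 y t Hyt)) as Hb.
  pose proof (Hb 0%nat). pose proof (Hb 1%nat). pose proof (Hb 2%nat).
  pose proof (Hb 3%nat). pose proof (Hb 4%nat).
  apply Rabs_le_between. simpl phi. lra.
Qed.

(** * Taylor coefficients of [zetaE] at [1] *)

Definition zetaE_coef (k : nat) (x : R) : R := euler_sum 3 (phi 0 k) x.

(* Dominates [Σ_k 2^k |fdiff_n 3 (phi 0 k) (n + x)|]: three differences give the decay
   [(n + x)^(-4)] and the weights [2^k] (radius 2 in [w]) cost a factor [(n + x + 3)^2],
   which still leaves a summable [(n + x)^(-2)]. *)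
Definition zetaE_majorant (x : R) (n : nat) : R :=
  60 * exp (2 * (ln (INR n + x + 3) + Rabs (ln x))) * (/ (INR n + x)) ^ 4.

Lemma Rabs_ln_le (x y t : R) : 0 < x <= y -> y <= t <= y + 3 ->
  Rabs (ln t) <= ln (y + 3) + Rabs (ln x).
Proof.
  intros Hxy Ht.
  assert (0 <= ln (y + 3)) by (rewrite <- ln_1; apply ln_le; lra).
  assert (ln t <= ln (y + 3)) by (apply ln_le; lra).
  assert (ln x <= ln t) by (apply ln_le; lra).
  pose proof (Rle_abs (- ln x)). rewrite Rabs_Ropp in *.
  apply Rabs_le_between. pose proof (Rabs_pos (ln x)). lra.
Qed.

Lemma Rabs_fdiff3_phi0_le (k : nat) (x y : R) : 0 < x <= y ->
  Rabs (fdiff_n 3 (phi 0 k) y) <= phi3_majorant (ln (y + 3) + Rabs (ln x)) k * (/ y) ^ 4.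
Proof.
  intros Hxy. apply (Rabs_fdiff_n_le (fun i => phi i k)); [lra | |].
  - intros i t Hi Ht. apply is_derive_phi; [lia | exact Ht].
  - intros t Ht. apply Rabs_phi3_le; [lra|]. apply (Rabs_ln_le x y t); simpl INR in Ht; lra.
Qed.

Lemma Series_Rabs_fdiff3_phi0_le (x : R) (n : nat) : 0 < x ->
  ex_series (fun k => Rabs (2 ^ k * fdiff_n 3 (phi 0 k) (INR n + x))) /\
  Series (fun k => Rabs (2 ^ k * fdiff_n 3 (phi 0 k) (INR n + x))) <= zetaE_majorant x n.
Proof.
  intros Hx. pose proof (pos_INR n).
  apply (Series_Rabs_le_is_series _
           (fun k => 2 ^ k * phi3_majorant (ln (INR n + x + 3) + Rabs (ln x)) k
                     * (/ (INR n + x)) ^ 4)).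
  - intros k. rewrite Rabs_mult, Rabs_pos_eq, Rmult_assoc by (apply pow_le; lra).
    apply Rmult_le_compat_l; [apply pow_le; lra|]. apply Rabs_fdiff3_phi0_le. lra.
  - apply is_series_scal_r, is_series_phi3_majorant.
Qed.

Lemma ex_series_zetaE_majorant (x : R) : 0 < x -> ex_series (zetaE_majorant x).
Proof.
  intros Hx. set (K := exp (2 * Rabs (ln x))).
  apply (ex_series_Rabs_le _
           (fun n => 60 * K * (2 * (/ (INR n + x)) ^ 2 + 18 * (/ (INR n + x)) ^ 4))).
  { destruct (ex_series_inv_pow x 2 Hx (le_n 2)) as [l2 H2].
    destruct (ex_series_inv_pow x 4 Hx ltac:(lia)) as [l4 H4].
    eexists. apply (is_series_scal_l (V := R_NormedModule)).
    apply (is_series_plus (V := R_NormedModule));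
      apply (is_series_scal_l (V := R_NormedModule)); eassumption. }
  intros n. pose proof (pos_INR n). unfold zetaE_majorant. set (y := INR n + x).
  assert (Hy : 0 < y) by (unfold y; lra).
  assert (HK : 0 < K) by apply exp_pos.
  assert (Hexp : exp (2 * (ln (y + 3) + Rabs (ln x))) = (y + 3) ^ 2 * K).
  { unfold K. rewrite Rmult_plus_distr_l, exp_plus.
    replace (2 * ln (y + 3)) with (ln (y + 3) + ln (y + 3)) by ring.
    rewrite exp_plus, exp_ln by lra. ring. }
  rewrite Hexp, Rabs_pos_eq.
  2: { apply Rmult_le_pos; [|apply pow_le, Rlt_le, Rinv_0_lt_compat; lra].
       apply Rmult_le_pos; [lra|]. apply Rmult_le_pos; [apply pow_le|]; lra. }
  replace (60 * ((y + 3) ^ 2 * K) * (/ y) ^ 4) with (60 * K * ((y + 3) ^ 2 * (/ y) ^ 4)) by ring.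
  apply Rmult_le_compat_l; [lra|].
  replace (2 * (/ y) ^ 2 + 18 * (/ y) ^ 4) with ((2 * y ^ 2 + 18) * (/ y) ^ 4) by (field; lra).
  apply Rmult_le_compat_r; [apply pow_le, Rlt_le, Rinv_0_lt_compat; lra|].
  pose proof (pow2_ge_0 (y - 3)). nra.
Qed.

Lemma Series_Rabs_fdiff3_phi0_pow_le (w x : R) (n : nat) : 0 < x -> Rabs w <= 2 ->
  ex_series (fun k => Rabs (fdiff_n 3 (fun t => w ^ k * phi 0 k t) (INR n + x))) /\
  Series (fun k => Rabs (fdiff_n 3 (fun t => w ^ k * phi 0 k t) (INR n + x)))
    <= zetaE_majorant x n.
Proof.
  intros Hx Hw. destruct (Series_Rabs_fdiff3_phi0_le x n Hx) as [Hex Hle].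
  assert (Hterm : forall k, Rabs (fdiff_n 3 (fun t => w ^ k * phi 0 k t) (INR n + x))
                            <= Rabs (2 ^ k * fdiff_n 3 (phi 0 k) (INR n + x))).
  { intros k. rewrite fdiff_n_scal, !Rabs_mult, <- !RPow_abs, (Rabs_pos_eq 2) by lra.
    apply Rmult_le_compat_r; [apply Rabs_pos | apply pow_incr; split; [apply Rabs_pos|]; lra]. }
  destruct (Series_Rabs_le_is_series _ _ _ Hterm (Series_correct _ Hex)) as [Hex' Hle'].
  split; [exact Hex' | lra].
Qed.

Lemma is_series_zetaE_coef_pow (w x : R) : 0 < x -> Rabs w <= 2 ->
  is_series (fun k => zetaE_coef k x * w ^ k) (euler_sum 3 (fun y => Rpower y (- (1 + w))) x).
Proof.
  intros Hx Hw.
  apply (is_series_ext_R (fun k => euler_sum 3 (fun t => w ^ k * phi 0 k t) x)).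
  { intros k. rewrite euler_sum_scal. apply Rmult_comm. }
  apply (is_series_euler_sum 3 _ _ (zetaE_majorant x)).
  - intros t Ht. apply is_series_phi0_pow. lra.
  - now apply ex_series_zetaE_majorant.
  - intros n. now apply Series_Rabs_fdiff3_phi0_pow_le.
Qed.

Lemma is_lim_seq_Rpower_INR (x z : R) : 0 < z ->
  is_lim_seq (fun n => Rpower (INR n + x) (- z)) 0.
Proof.
  intros Hz. unfold Rpower.
  apply (is_lim_comp_seq exp _ m_infty 0); [apply is_lim_exp_m | exists O; discriminate |].
  assert (Hln : is_lim_seq (fun n => ln (INR n + x)) p_infty).
  { apply (is_lim_comp_seq ln _ p_infty p_infty); [apply is_lim_ln_p | exists O; discriminate |].
    eapply is_lim_seq_plus; [apply is_lim_seq_INR | apply is_lim_seq_const | reflexivity]. }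
  pose proof (is_lim_seq_scal_l _ (- z) _ Hln) as Hlim. simpl in Hlim.
  destruct (Rle_dec 0 (- z)); [lra | exact Hlim].
Qed.

Lemma zetaE_euler_sum (z x : R) : 0 < x -> 0 < z <= 3 ->
  zetaE z x = euler_sum 3 (fun y => Rpower y (- z)) x.
Proof.
  intros Hx Hz. set (w := z - 1).
  assert (Hw : Rabs w <= 2) by (apply Rabs_le_between; unfold w; lra).
  replace z with (1 + w) by (unfold w; ring).
  apply is_series_unique, is_series_alt_euler_sum; [apply is_lim_seq_Rpower_INR; unfold w; lra|].
  apply (ex_series_Rabs_le _ (zetaE_majorant x)); [now apply ex_series_zetaE_majorant|].
  intros n. rewrite Rabs_sign_mult.
  destruct (Series_Rabs_fdiff3_phi0_pow_le w x n Hx Hw) as [Hex Hle].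
  assert (Hrow : is_series (fun k => fdiff_n 3 (fun t => w ^ k * phi 0 k t) (INR n + x))
                           (fdiff_n 3 (fun y => Rpower y (- (1 + w))) (INR n + x))).
  { apply is_series_fdiff_n. intros t Ht. apply is_series_phi0_pow.
    pose proof (pos_INR n). lra. }
  rewrite <- (is_series_unique _ _ Hrow).
  eapply Rle_trans; [apply Series_Rabs, Hex | exact Hle].
Qed.

Lemma CV_radius_zetaE_coef_pos (x : R) : 0 < x ->
  Rbar_lt 0 (CV_radius (fun k => zetaE_coef k x)).
Proof.
  intros Hx. apply (Rbar_lt_le_trans _ (Rabs 2)); [rewrite Rabs_pos_eq by lra; simpl; lra|].
  apply CV_radius_ge_of_ex_series.
  eexists. apply is_series_zetaE_coef_pow; [exact Hx | rewrite Rabs_pos_eq; lra].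
Qed.

Lemma stieltjesE_zetaE_coef (k : nat) (x : R) : 0 < x ->
  stieltjesE k x = (-1) ^ k * INR (fact k) * zetaE_coef k x.
Proof.
  intros Hx. unfold stieltjesE. rewrite Rmult_assoc. f_equal.
  rewrite (Derive_n_ext_loc _ (fun z => PSeries (fun j => zetaE_coef j x) (z + -1))).
  - rewrite Derive_n_comp_trans, Rplus_opp_r, Derive_n_coef by now apply CV_radius_zetaE_coef_pos.
    apply Rmult_comm.
  - exists (mkposreal 1 Rlt_0_1). intros z Hz. change (Rabs (z - 1) < 1) in Hz.
    apply Rabs_def2 in Hz.
    rewrite zetaE_euler_sum; [|exact Hx | split; lra].
    symmetry. apply is_series_unique.
    replace (- z) with (- (1 + (z + -1))) by ring.
    apply is_series_zetaE_coef_pow; [exact Hx | apply Rabs_le_between; split; lra].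
Qed.

Lemma Rabs_fdiff3_phi0_le_majorant (k : nat) (x : R) (n : nat) : 0 < x ->
  Rabs (fdiff_n 3 (phi 0 k) (INR n + x)) <= zetaE_majorant x n.
Proof.
  intros Hx. destruct (Series_Rabs_fdiff3_phi0_le x n Hx) as [Hex Hle].
  refine (Rle_trans _ _ _ _ (Rle_trans _ _ _ (term_le_Series _ k (fun _ => Rabs_pos _) Hex) Hle)).
  rewrite Rabs_mult, (Rabs_pos_eq (2 ^ k)) by (apply pow_le; lra).
  rewrite <- (Rmult_1_l (Rabs _)) at 1.
  apply Rmult_le_compat_r; [apply Rabs_pos | apply pow_R1_Rle; lra].
Qed.

Lemma is_derive_zetaE_coef (j : nat) (x : R) : 0 < x ->
  is_derive (zetaE_coef j) x (euler_sum 3 (phi 1 j) x).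
Proof.
  intros Hx.
  apply (is_derive_euler_sum 3 _ _
           (fun n => 120 * ((/ (INR n + x / 2)) ^ 4 + (/ (INR n + x / 2)) ^ 6)) x (x / 2)).
  - lra.
  - destruct (ex_series_inv_pow (x / 2) 4 ltac:(lra) ltac:(lia)) as [l4 H4].
    destruct (ex_series_inv_pow (x / 2) 6 ltac:(lra) ltac:(lia)) as [l6 H6].
    eexists. apply (is_series_scal_l (V := R_NormedModule)).
    apply (is_series_plus (V := R_NormedModule)); eassumption.
  - intros t Ht. apply is_derive_phi; [lia | exact Ht].
  - intros n t Ht. apply Rabs_def2 in Ht. pose proof (pos_INR n).
    apply (Rabs_fdiff_n_le (fun i => phi (S i) j)); [lra | |].
    + intros i s Hi Hs. apply is_derive_phi; [lia | exact Hs].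
    + intros s Hs. apply Rabs_phi4_le. lra.
  - intros t Ht. apply Rabs_def2 in Ht.
    apply (ex_series_Rabs_le _ (zetaE_majorant t)); [apply ex_series_zetaE_majorant; lra|].
    intros n. rewrite Rabs_sign_mult. apply Rabs_fdiff3_phi0_le_majorant. lra.
Qed.

Lemma is_series_binom_zetaE_coef (j : nat) (x : R) : 0 < x ->
  is_series (fun n => Binomial.C (n + (j - 1) + 1) j * zetaE_coef (n + (j - 1)) x)
            (- euler_sum 3 (phi 1 j) x).
Proof.
  intros Hx. set (s := (j - 1)%nat).
  apply (is_series_ext_R
           (fun n => euler_sum 3 (fun t => Binomial.C (n + s + 1) j * phi 0 (n + s) t) x)).
  { intros n. apply euler_sum_scal. }
  replace (- euler_sum 3 (phi 1 j) x) with (euler_sum 3 (fun t => -1 * phi 1 j t) x)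
    by (rewrite euler_sum_scal; ring).
  apply (is_series_euler_sum 3 _ _ (fun m => 2 * zetaE_majorant x m)).
  - intros t Ht. replace (-1 * phi 1 j t) with (- phi 1 j t) by ring.
    apply is_series_binom_phi0. lra.
  - destruct (ex_series_zetaE_majorant x Hx) as [l Hl].
    exists (2 * l). now apply (is_series_scal_l (V := R_NormedModule)).
  - intros m. destruct (Series_Rabs_fdiff3_phi0_le x m Hx) as [Hex Hle].
    set (v := fun k => Rabs (2 ^ k * fdiff_n 3 (phi 0 k) (INR m + x))) in *.
    destruct (Series_shift_le v s (fun k => Rabs_pos _) Hex) as [Hexs Hles].
    assert (Hterm : forall n,
      Rabs (fdiff_n 3 (fun t => Binomial.C (n + s + 1) j * phi 0 (n + s) t) (INR m + x))
      <= 2 * v (n + s)%nat).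
    { intros n. unfold v. rewrite fdiff_n_scal, !Rabs_mult.
      rewrite (Rabs_pos_eq (Binomial.C _ _)) by apply C_nonneg.
      rewrite (Rabs_pos_eq (2 ^ _)) by (apply pow_le; lra).
      replace (2 * (2 ^ (n + s) * _))
        with (2 ^ (n + s + 1) * Rabs (fdiff_n 3 (phi 0 (n + s)) (INR m + x)))
        by (rewrite pow_add; ring).
      apply Rmult_le_compat_r; [apply Rabs_pos | apply C_le_pow2; unfold s; lia]. }
    assert (Hsum : is_series (fun n => 2 * v (n + s)%nat) (2 * Series (fun n => v (n + s)%nat)))
      by now apply (is_series_scal_l (V := R_NormedModule)), Series_correct.
    destruct (Series_Rabs_le_is_series _ _ _ Hterm Hsum) as [Hex' Hle'].
    split; [exact Hex' | lra].
Qed.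

Lemma sign_fact_cancel (k : nat) (c : R) :
  (-1) ^ k / INR (fact k) * ((-1) ^ k * INR (fact k) * c) = c.
Proof.
  pose proof (INR_fact_neq_0 k).
  replace ((-1) ^ k / INR (fact k) * ((-1) ^ k * INR (fact k) * c))
    with ((-1 * -1) ^ k * c * (INR (fact k) / INR (fact k)))
    by (rewrite Rpow_mult_distr; field; exact H).
  replace (-1 * -1) with 1 by ring. rewrite pow1. field. exact H.
Qed.

Lemma stieltjesE_series_term (k : nat) (c x : R) : 0 < x ->
  (-1) ^ k / INR (fact k) * c * stieltjesE k x = c * zetaE_coef k x.
Proof.
  intros Hx. rewrite stieltjesE_zetaE_coef by exact Hx.
  rewrite <- (sign_fact_cancel k (c * zetaE_coef k x)). ring.
Qed.

Lemma psiE_zetaE_coef (x : R) : 0 < x -> psiE x = - zetaE_coef 0 x.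
Proof.
  intros Hx. pose proof (stieltjesE_zetaE_coef 0 x Hx) as H0.
  unfold stieltjesE in H0. cbn [Derive_n pow fact INR] in H0. unfold psiE. lra.
Qed.

Theorem proposition3p23 (q : R) (hq : 0 < q) :
  (forall j : nat, (1 <= j)%nat ->
     exists d : R,
       is_derive (fun x => stieltjesE j x) q d /\
       is_series
         (fun m : nat =>
            (-1) ^ (m + (j - 1)) / INR (fact (m + (j - 1)))
            * Binomial.C (m + (j - 1) + 1) j * stieltjesE (m + (j - 1)) q)
         (- ((-1) ^ j / INR (fact j) * d)))
  /\
  (exists d l : R,
     is_derive psiE q d /\
     is_series (fun k : nat => (-1) ^ k / INR (fact k) * stieltjesE k q) l /\
     - d = - l).
Proof.
  split.
  - intros j _. exists ((-1) ^ j * INR (fact j) * euler_sum 3 (phi 1 j) q). split.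
    + apply (is_derive_ext_loc (fun t => (-1) ^ j * INR (fact j) * zetaE_coef j t)).
      { generalize (open_gt 0 q hq). apply filter_imp. intros t Ht.
        now rewrite stieltjesE_zetaE_coef. }
      apply is_derive_scal, is_derive_zetaE_coef, hq.
    + rewrite sign_fact_cancel.
      eapply is_series_ext_R; [|exact (is_series_binom_zetaE_coef j q hq)].
      intros m. now rewrite stieltjesE_series_term.
  - exists (- euler_sum 3 (phi 1 0) q), (- euler_sum 3 (phi 1 0) q).
    split; [|split; [|reflexivity]].
    + apply (is_derive_ext_loc (fun t => - zetaE_coef 0 t)).
      { generalize (open_gt 0 q hq). apply filter_imp. intros t Ht.
        now rewrite psiE_zetaE_coef. }
      apply (is_derive_opp (V := R_NormedModule)), is_derive_zetaE_coef, hq.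
    + (* The binomial series at [j = 0], where [0 - 1 = 0] and [C(k+1, 0) = 1]. *)
      eapply is_series_ext_R; [|exact (is_series_binom_zetaE_coef 0 q hq)].
      intros k. cbv beta. replace (k + (0 - 1))%nat with k by lia. rewrite C_n_0.
      rewrite <- (Rmult_1_r ((-1) ^ k / INR (fact k))). now rewrite stieltjesE_series_term.
Qed.
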